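(* Let $X$ be a finite set with $|X|>1$ and let $s=s_k s_{k-1}\cdots s_1\in\mathbb F_X$ be a reduced word with $s_i\in X\cup X^{-1}$. Then for every $n\in\mathbb N$, $$P(s^{-1},n)=\bigcup_{i=0}^k B_{\frac{n-k}{2}}\, s_i\cdots s_1,$$ where for $i=0$ the product $s_i\cdots s_1$ is the empty word.
   Context: $\mathbb F_X$ is the free group on $X$ with reduced word length $|\cdot|$; for real $r$, $B_r=\{\omega\in\mathbb F_X:|\omega|\le r\}$. For $s\in\mathbb F_X$ and $n\in\mathbb N$, $P(s,n)=\{\omega\in\mathbb F_X:|\omega|+|\omega s|\le n\}$. *)

(* Free group F_X on a finite set X, realized concretely as
   reduced words over the alphabet X x bool ((x,true) = x, (x,false) = x^-1). *)
From mathcomp Require Import all_boot all_order all_algebra.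
Set Implicit Arguments. Unset Strict Implicit. Unset Printing Implicit Defensive.
Import Order.TTheory GRing.Theory Num.Theory.

Section FreeGroup.
Variable X : finType.

Definition letter := (X * bool)%type.
Definition linv (a : letter) : letter := (a.1, ~~ a.2).

Definition reducedw (w : seq letter) : bool := sorted (fun a b => b != linv a) w.

Definition push (a : letter) (s : seq letter) : seq letter :=
  if s is b :: s' then (if b == linv a then s' else a :: s) else [:: a].
Definition reduce (w : seq letter) : seq letter := foldr push [::] w.

Definition wmul (u v : seq letter) : seq letter := reduce (u ++ v).
Definition winv (w : seq letter) : seq letter := rev (map linv w).
Definition wlen (w : seq letter) : nat := size w.

(* B_r = { w in F_X : |w| <= r }, r real (here rational suffices) *)
Definition ball (r : rat) (w : seq letter) : Prop :=
  reducedw w /\ ((wlen w)%:R <= r)%R.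

Definition Pset (s : seq letter) (n : nat) (w : seq letter) : Prop :=
  reducedw w /\ wlen w + wlen (wmul w s) <= n.

End FreeGroup.

(* Split off the longest common suffix: w = b c and s = d c.  Then b d^-1 is
   reduced and equals w s^-1, so |w| + |w s^-1| = 2|b| + |s|, and w = b c with
   c a suffix of s.  Conversely, if w = b t with s = d t, the triangle
   inequality gives |w| + |w s^-1| <= (|b| + |t|) + (|b| + |d|) = 2|b| + |s|. *)
From mathcomp Require Import all_boot all_order all_algebra zify.
Set Implicit Arguments. Unset Strict Implicit. Unset Printing Implicit Defensive.
Import Order.TTheory GRing.Theory Num.Theory.

Section ReducedWords.
Variable X : finType.
Implicit Types (a : letter X) (b d t u v w z : seq (letter X)).

Lemma linvK : involutive (@linv X).
Proof. by case=> x []. Qed.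

Lemma linv_inj : injective (@linv X).
Proof. exact: inv_inj linvK. Qed.

Definition pushs u z := foldr (@push X) z u.

Lemma reduce_cat u v : reduce (u ++ v) = pushs u (reduce v).
Proof. exact: foldr_cat. Qed.

Lemma pushs_cat u v z : pushs (u ++ v) z = pushs u (pushs v z).
Proof. exact: foldr_cat. Qed.

Lemma reducedw_behead a w : reducedw (a :: w) -> reducedw w.
Proof. exact: path_sorted. Qed.

Lemma reducedw_catl u v : reducedw (u ++ v) -> reducedw u.
Proof. by case/cat_sorted2. Qed.

Lemma reducedw_push a w : reducedw w -> reducedw (push a w).
Proof.
case: w => [|b w] //= red_bw.
case: ifP => [_|b_ne]; first exact: path_sorted red_bw.
by rewrite /reducedw /= b_ne.
Qed.

Lemma reducedw_pushs u z : reducedw z -> reducedw (pushs u z).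
Proof. by elim: u => //= a u IHu /IHu; apply: reducedw_push. Qed.

Lemma reducedw_reduce u : reducedw (reduce u).
Proof. exact: reducedw_pushs. Qed.

Lemma reduce_id w : reducedw w -> reduce w = w.
Proof.
elim: w => //= a w IHw red_aw; rewrite IHw; last exact: reducedw_behead red_aw.
by case: w red_aw {IHw} => //= b w /andP[/negbTE ->].
Qed.

Lemma reducedw_winv w : reducedw w -> reducedw (winv w).
Proof.
rewrite /reducedw /winv rev_sorted sorted_map; apply: sub_sorted => a b /=.
by rewrite linvK eq_sym.
Qed.

Lemma winv_cat u v : winv (u ++ v) = winv v ++ winv u.
Proof. by rewrite /winv map_cat rev_cat. Qed.

Lemma winv_rcons w a : winv (rcons w a) = linv a :: winv w.
Proof. by rewrite /winv map_rcons rev_rcons. Qed.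

Lemma size_winv w : size (winv w) = size w.
Proof. by rewrite size_rev size_map. Qed.

Lemma push_linvK a w : reducedw w -> push a (push (linv a) w) = w.
Proof.
case: w => [|b w] /=; first by rewrite eqxx.
case: ifP => [/eqP b_eq|_] red_bw; last by rewrite /= eqxx.
rewrite linvK in b_eq; rewrite b_eq; case: w red_bw => [|c w] //= /andP[c_ne _].
by rewrite -b_eq (negbTE c_ne).
Qed.

Lemma pushs_push a u z : reducedw u -> reducedw z ->
  pushs (push a u) z = push a (pushs u z).
Proof.
case: u => [|b u] //= _ red_z; case: ifP => [/eqP ->|] //.
by rewrite push_linvK //; apply: reducedw_pushs.
Qed.

Lemma pushs_reduce u z : reducedw z -> pushs (reduce u) z = pushs u z.
Proof.
move=> red_z; elim: u => //= a u IHu.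
by rewrite pushs_push ?IHu //; apply: reducedw_reduce.
Qed.

Lemma reduce_reducel u v : reduce (reduce u ++ v) = reduce (u ++ v).
Proof. by rewrite !reduce_cat pushs_reduce // reducedw_reduce. Qed.

Lemma pushs_cancel t z : reducedw z -> pushs (t ++ winv t) z = z.
Proof.
move=> red_z; elim/last_ind: t => [|t a IHt] //.
rewrite winv_rcons cat_rcons pushs_cat /= push_linvK -?pushs_cat //.
exact: reducedw_pushs.
Qed.

Lemma reduce_cancel u t v : reduce (u ++ t ++ winv t ++ v) = reduce (u ++ v).
Proof.
by rewrite !reduce_cat -[pushs t _]pushs_cat pushs_cancel // reducedw_reduce.
Qed.

Lemma size_push a w : size (push a w) <= (size w).+1.
Proof. by case: w => //= b w; case: ifP => //= _; rewrite ltnW. Qed.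

Lemma size_pushs u z : size (pushs u z) <= size u + size z.
Proof. by elim: u => //= a u IHu; apply: leq_trans (size_push _ _) _. Qed.

Lemma size_reduce u : size (reduce u) <= size u.
Proof. by rewrite -[size u]addn0; apply: size_pushs. Qed.

(* At the first mismatch from the right, the last letters of b and of winv d
   are not mutually inverse, so b ++ winv d stays reduced. *)
Lemma reducedw_common_suffix w s : reducedw w -> reducedw s ->
  exists b c d, [/\ w = b ++ c, s = d ++ c & reducedw (b ++ winv d)].
Proof.
elim/last_ind: w s => [|w x IHw] s red_w red_s.
  by exists [::], [::], s; rewrite !cats0; split=> //; apply: reducedw_winv.
case/lastP: s red_s => [|s y] red_s.
  by exists (rcons w x), [::], [::]; rewrite !cats0.
have [x_eq_y|x_ne_y] := eqVneq x y.
  subst y; move: red_w red_s; rewrite -!cats1 => red_w red_s.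
  have [b [c [d [-> -> red_bd]]]] :=
    IHw s (reducedw_catl red_w) (reducedw_catl red_s).
  by exists b, (rcons c x), d; rewrite -!cats1 !catA.
exists (rcons w x), [::], (rcons s y); rewrite !cats0; split=> //.
have := reducedw_winv red_s.
rewrite winv_rcons /reducedw cat_rcons sorted_cat_cons.
by move=> /= ->; rewrite (inj_eq linv_inj) eq_sym x_ne_y !andbT.
Qed.

End ReducedWords.

Lemma ler_nat_half_sub (R : realFieldType) (m n k : nat) :
  ((m%:R : R) <= (n%:R - k%:R) / 2%:R)%R = (m * 2 + k <= n).
Proof. by rewrite ler_pdivlMr ?ltr0n // lerBrDr -natrM -natrD ler_nat. Qed.

Theorem lemma3p4 (X : finType) (hX : 1 < #|X|) (s : seq (letter X))
  (hs : reducedw s) (n : nat) (w : seq (letter X)) :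
  Pset (winv s) n w <->
  exists i : nat, i <= size s /\
    exists b : seq (letter X),
      ball ((n%:R - (size s)%:R) / 2%:R)%R b /\ w = wmul b (drop (size s - i) s).
Proof.
rewrite /Pset /ball /wlen /wmul; split.
- case=> red_w len_n.
  have [b [c [d [w_bc s_dc red_bd]]]] := reducedw_common_suffix red_w hs.
  have ws_bd : reduce (w ++ winv s) = b ++ winv d.
    by rewrite w_bc s_dc winv_cat -catA reduce_cancel reduce_id.
  exists (size c); split; first by rewrite s_dc size_cat leq_addl.
  exists b; split.
    split; first exact: reducedw_catl red_bd.
    rewrite ler_nat_half_sub; move: len_n.
    by rewrite ws_bd w_bc s_dc !size_cat size_winv; lia.
  by rewrite s_dc size_cat addnK drop_size_cat // -w_bc reduce_id.
- case=> i [_ [b [[_ len_b] ->]]]; split; first exact: reducedw_reduce.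
  rewrite ler_nat_half_sub in len_b.
  set t := drop _ s; set d := take (size s - i) s.
  have s_dt : s = d ++ t by rewrite cat_take_drop.
  rewrite reduce_reducel [in winv s]s_dt winv_cat -catA reduce_cancel.
  have := size_reduce (b ++ t); have := size_reduce (b ++ winv d).
  by rewrite s_dt !size_cat size_winv in len_b *; lia.
Qed.
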